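(* Let $q>0$, let $a:[0,\infty)\to[0,\infty)$ be continuous and let $r:[0,\infty)\to[0,q]$ be continuous. Let $\varphi\in C([-q,0],\mathbb R)$, let $x=x(\varphi)$ be the solution on $[-q,\infty)$ of $$x'(t)=-a(t)x(t-r(t)),\ t\ge0,\qquad x(t)=\varphi(t),\ -q\le t\le 0,$$ and for every integer $k\ge1$ and $h=q/k$ let $z_h=z_h(\varphi)$ be the solution of $$z_h'(t)=-a(t)\,z_h\big((i-k_i)h\big)\ \ (t\in[ih,(i+1)h),\ i\ge0),\qquad z_h(nh)=\varphi(nh),\ n=-k,\dots,0.$$ Then for every $T>0$ and every such $h$, $$\max_{0\le t\le T}|x(t)-z_h(t)|\le e^{\int_0^T a(s)ds}\Big(\int_0^T a(s)\,ds\Big)\,w_x\big(w_r(h;T)+2h;T\big),$$ and consequently $\lim_{h\to0}\max_{0\le t\le T}|x(t)-z_h(t)|=0$ for every $T>0$ (limit along $h=q/k$, $k\to\infty$).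
   Context: Here $k_i:=\lfloor r(ih)/h\rfloor$ for $i\ge0$; a solution $z_h$ is a function defined on the grid points $\{nh:n=-k,\dots,0\}$ and on $[0,\infty)$, continuous on $[0,\infty)$, differentiable except possibly at the points $ih$ (where finite one-sided derivatives exist), and satisfying the equation on each $[ih,(i+1)h)$. The moduli of continuity are $w_r(h;T)=\max\{|r(t_2)-r(t_1)|:\ 0\le t_1,t_2\le T,\ |t_2-t_1|\le h\}$ and $w_x(\delta;T)=\max\{|x(t_2)-x(t_1)|:\ -q\le t_1,t_2\le T,\ |t_2-t_1|\le \delta\}$. *)

From Stdlib Require Import Reals Lra ClassicalEpsilon.
Open Scope R_scope.

Definition continuous_on (f : R -> R) (D : R -> Prop) : Prop :=
  forall t, D t -> forall eps, 0 < eps -> exists d, 0 < d /\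
    forall s, D s -> Rabs (s - t) < d -> Rabs (f s - f t) < eps.

Definition rderiv (f : R -> R) (t l : R) : Prop :=
  forall eps, 0 < eps -> exists d, 0 < d /\
    forall e, 0 < e < d -> Rabs ((f (t + e) - f t) / e - l) < eps.

Definition lub_of (S : R -> Prop) : R := epsilon (inhabits 0) (fun m => is_lub S m).

Definition sup_on (f : R -> R) (lo hi : R) : R :=
  lub_of (fun y => exists t, lo <= t <= hi /\ y = f t).

Definition modulus (f : R -> R) (lo T d : R) : R :=
  lub_of (fun y => exists t1 t2, lo <= t1 <= T /\ lo <= t2 <= T /\
            Rabs (t2 - t1) <= d /\ y = Rabs (f t2 - f t1)).

Definition integral (f : R -> R) (lo hi : R) : R :=
  epsilon (inhabits 0)
    (fun I => exists pr : Riemann_integrable f lo hi, RiemannInt pr = I).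

Definition is_solution_x (q : R) (a r phi x : R -> R) : Prop :=
  (forall t, -q <= t <= 0 -> x t = phi t) /\
  continuous_on x (fun t => -q <= t) /\
  (forall t, 0 < t -> derivable_pt_lim x t (- a t * x (t - r t))) /\
  rderiv x 0 (- a 0 * x (0 - r 0)).

Definition kidx (r : R -> R) (h : R) (i : nat) : R :=
  IZR (Int_part (r (INR i * h) / h)).

Definition is_solution_z (q : R) (a r phi : R -> R) (k : nat) (z : R -> R) : Prop :=
  let h := q / INR k in
  (forall n : nat, (n <= k)%nat -> z (- INR n * h) = phi (- INR n * h)) /\
  continuous_on z (fun t => 0 <= t) /\
  (forall (i : nat) t, INR i * h < t < (INR i + 1) * h ->
      derivable_pt_lim z t (- a t * z ((INR i - kidx r h i) * h))) /\
  (forall i : nat,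
      rderiv z (INR i * h) (- a (INR i * h) * z ((INR i - kidx r h i) * h))).

(** Let [e = x - z_h].  On a grid interval [[ih, (i+1)h]] the delayed arguments [t - r(t)]
    and [(i - k_i)h] differ by at most [w_r(h) + 2h], so [|e'(t)| <= a(t) (W + |e((i-k_i)h)|)]
    with [W = w_x(w_r(h) + 2h; T)]; moreover [(i - k_i)h] is either an earlier grid point or
    an initial point, where [e] vanishes.  Induction over the grid intervals thus compares
    [|e|] with the solution [G = W (e^A - 1)] of [G' = a (W + G)], [G(0) = 0], where [A] is
    the primitive of [a], and [G(T) <= e^{A(T)} A(T) W].  The convergence follows because
    [x] and [r] are uniformly continuous on compact intervals, so [W -> 0] with [h]. *)

From Pilot Require Import Defs.
From Stdlib Require Import Reals Lra Lia ZArith Wf_nat ClassicalEpsilon.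
From Coquelicot Require Import Coquelicot.
(* Coquelicot also defines [continuous_on]; re-import so that the name refers to Defs. *)
Import Pilot.Defs.
Open Scope R_scope.

Definition clamp (lo hi t : R) : R := Rmax lo (Rmin t hi).

Lemma clamp_in lo hi t : lo <= hi -> lo <= clamp lo hi t <= hi.
Proof. intros; unfold clamp, Rmax, Rmin; repeat destruct Rle_dec; lra. Qed.

Lemma clamp_id lo hi t : lo <= t <= hi -> clamp lo hi t = t.
Proof. intros; unfold clamp, Rmax, Rmin; repeat destruct Rle_dec; lra. Qed.

Lemma clamp_Rabs_le lo hi s t :
  lo <= hi -> Rabs (clamp lo hi s - clamp lo hi t) <= Rabs (s - t).
Proof.
  intros; unfold clamp, Rmax, Rmin; repeat destruct Rle_dec;
    unfold Rabs; repeat destruct Rcase_abs; lra.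
Qed.

Lemma continuous_on_subset (f : R -> R) (D D' : R -> Prop) :
  continuous_on f D -> (forall t, D' t -> D t) -> continuous_on f D'.
Proof.
  intros Hf HD t Dt eps Heps.
  destruct (Hf t (HD t Dt) eps Heps) as [d [Hd Hfd]].
  exists d; split; auto.
Qed.

Lemma continuous_on_minus (f g : R -> R) (D : R -> Prop) :
  continuous_on f D -> continuous_on g D -> continuous_on (fun t => f t - g t) D.
Proof.
  intros Hf Hg t Dt eps Heps.
  destruct (Hf t Dt (eps / 2)) as [d1 [Hd1 H1]]; [lra|].
  destruct (Hg t Dt (eps / 2)) as [d2 [Hd2 H2]]; [lra|].
  exists (Rmin d1 d2); split; [apply Rmin_pos; auto|].
  intros s Ds Hs.
  assert (A1 := H1 s Ds (Rlt_le_trans _ _ _ Hs (Rmin_l _ _))).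
  assert (A2 := H2 s Ds (Rlt_le_trans _ _ _ Hs (Rmin_r _ _))).
  replace (f s - g s - (f t - g t)) with ((f s - f t) - (g s - g t)) by ring.
  eapply Rle_lt_trans; [apply Rabs_triang|]. rewrite Rabs_Ropp. lra.
Qed.

Lemma continuous_on_opp (f : R -> R) (D : R -> Prop) :
  continuous_on f D -> continuous_on (fun t => - f t) D.
Proof.
  intros Hf t Dt eps Heps. destruct (Hf t Dt eps Heps) as [d [Hd Hfd]].
  exists d; split; auto. intros s Ds Hs.
  replace (- f s - - f t) with (- (f s - f t)) by ring. rewrite Rabs_Ropp; auto.
Qed.

Lemma continuous_on_Rabs (f : R -> R) (D : R -> Prop) :
  continuous_on f D -> continuous_on (fun t => Rabs (f t)) D.
Proof.
  intros Hf t Dt eps Heps. destruct (Hf t Dt eps Heps) as [d [Hd Hfd]].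
  exists d; split; auto. intros s Ds Hs.
  eapply Rle_lt_trans; [apply Rabs_triang_inv2|]. auto.
Qed.

Lemma continuous_on_of_continuity_pt (f : R -> R) (D : R -> Prop) :
  (forall c, continuity_pt f c) -> continuous_on f D.
Proof.
  intros Hf t _ eps Heps. destruct (Hf t eps Heps) as [d [Hd Hfd]].
  exists d; split; auto. intros s _ Hs.
  destruct (Req_dec s t) as [->|Hst].
  - rewrite Rminus_eq_0, Rabs_R0; auto.
  - apply (Hfd s). repeat split; auto.
Qed.

Lemma continuity_pt_clamp f lo hi : lo <= hi ->
  continuous_on f (fun t => lo <= t <= hi) ->
  forall c, continuity_pt (fun t => f (clamp lo hi t)) c.
Proof.
  intros Hlh Hf c eps Heps.
  destruct (Hf (clamp lo hi c) (clamp_in lo hi c Hlh) eps Heps) as [d [Hd Hfd]].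
  exists d; split; auto. intros s [_ Hs]. simpl in *. unfold R_dist in *.
  apply Hfd; [apply clamp_in; auto|].
  eapply Rle_lt_trans; [apply clamp_Rabs_le|]; auto.
Qed.

Lemma continuity_pt_Rmax_left (f : R -> R) lo :
  continuous_on f (fun t => lo <= t) -> forall c, continuity_pt (fun t => f (Rmax lo t)) c.
Proof.
  intros Hf c eps Heps.
  destruct (Hf (Rmax lo c) (Rmax_l _ _) eps Heps) as [d [Hd Hfd]].
  exists d; split; auto. intros s [_ Hs]. simpl in *. unfold R_dist in *.
  apply Hfd; [apply Rmax_l|].
  eapply Rle_lt_trans; [|exact Hs].
  unfold Rmax; repeat destruct Rle_dec; unfold Rabs; repeat destruct Rcase_abs; lra.
Qed.

Lemma continuous_on_bounded f lo hi : lo <= hi ->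
  continuous_on f (fun t => lo <= t <= hi) ->
  exists M, forall t, lo <= t <= hi -> Rabs (f t) <= M.
Proof.
  intros Hlh Hf.
  destruct (continuity_ab_maj _ lo hi Hlh
             (fun c _ => continuity_pt_clamp _ _ _ Hlh (continuous_on_Rabs _ _ Hf) c))
    as [m [Hm _]].
  exists (Rabs (f (clamp lo hi m))). intros t Ht.
  specialize (Hm t Ht). rewrite clamp_id in Hm; auto.
Qed.

Lemma continuous_on_uniform f lo hi : lo <= hi ->
  continuous_on f (fun t => lo <= t <= hi) ->
  forall eps, 0 < eps -> exists d, 0 < d /\
    forall s t, lo <= s <= hi -> lo <= t <= hi -> Rabs (s - t) < d -> Rabs (f s - f t) < eps.
Proof.
  intros Hlh Hf eps Heps.
  destruct (Heine _ _ (compact_P3 lo hi) (fun c _ => continuity_pt_clamp _ _ _ Hlh Hf c)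
              (mkposreal eps Heps)) as [d Hd].
  exists d; split; [apply cond_pos|]. intros s t Hs Ht Hst.
  specialize (Hd s t Hs Ht Hst). simpl in Hd. rewrite !clamp_id in Hd; auto.
Qed.

Lemma is_lub_lub_of (S : R -> Prop) :
  (exists y, S y) -> (exists B, forall y, S y -> y <= B) -> is_lub S (lub_of S).
Proof.
  intros Hne [B HB]. unfold lub_of. apply epsilon_spec.
  destruct (completeness S) as [m Hm]; [exists B; exact HB | exact Hne |].
  exists m; exact Hm.
Qed.

Lemma lub_of_le (S : R -> Prop) B :
  (exists y, S y) -> (forall y, S y -> y <= B) -> lub_of S <= B.
Proof.
  intros Hne HB. apply (is_lub_lub_of S Hne (ex_intro _ B HB)). exact HB.
Qed.

Lemma le_lub_of (S : R -> Prop) y B : (forall y, S y -> y <= B) -> S y -> y <= lub_of S.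
Proof.
  intros HB Hy. apply (is_lub_lub_of S (ex_intro _ y Hy) (ex_intro _ B HB)). exact Hy.
Qed.

Lemma sup_on_le f lo hi B :
  lo <= hi -> (forall t, lo <= t <= hi -> f t <= B) -> sup_on f lo hi <= B.
Proof.
  intros Hlh HB. apply lub_of_le.
  - exists (f lo), lo; split; [lra | reflexivity].
  - intros y [t [Ht ->]]. auto.
Qed.

Lemma le_sup_on f lo hi B t :
  (forall t, lo <= t <= hi -> f t <= B) -> lo <= t <= hi -> f t <= sup_on f lo hi.
Proof.
  intros HB Ht. apply le_lub_of with B.
  - intros y [s [Hs ->]]. auto.
  - exists t; auto.
Qed.

Lemma le_modulus f lo T d M t1 t2 :
  (forall t, lo <= t <= T -> Rabs (f t) <= M) ->
  lo <= t1 <= T -> lo <= t2 <= T -> Rabs (t2 - t1) <= d ->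
  Rabs (f t2 - f t1) <= modulus f lo T d.
Proof.
  intros HM H1 H2 H12. apply le_lub_of with (2 * M).
  - intros y [s1 [s2 [A1 [A2 [_ ->]]]]].
    assert (B1 := HM s1 A1). assert (B2 := HM s2 A2).
    eapply Rle_trans; [apply Rabs_triang|]. rewrite Rabs_Ropp. lra.
  - exists t1, t2. repeat split; auto; lra.
Qed.

Lemma modulus_ge0 f lo T d M :
  (forall t, lo <= t <= T -> Rabs (f t) <= M) -> lo <= T -> 0 <= d ->
  0 <= modulus f lo T d.
Proof.
  intros HM HlT Hd.
  assert (H := le_modulus f lo T d M T T HM).
  rewrite !Rminus_eq_0, !Rabs_R0 in H. apply H; lra.
Qed.

Lemma modulus_le f lo T d B : lo <= T -> 0 <= d ->
  (forall t1 t2, lo <= t1 <= T -> lo <= t2 <= T -> Rabs (t2 - t1) <= d ->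
     Rabs (f t2 - f t1) <= B) ->
  modulus f lo T d <= B.
Proof.
  intros HlT Hd HB. apply lub_of_le.
  - exists (Rabs (f lo - f lo)), lo, lo. repeat split; try lra.
    rewrite Rminus_eq_0, Rabs_R0; lra.
  - intros y [t1 [t2 [A1 [A2 [A3 ->]]]]]. auto.
Qed.

Lemma modulus_small f lo T : lo <= T -> continuous_on f (fun t => lo <= t <= T) ->
  forall eps, 0 < eps -> exists d0, 0 < d0 /\
    forall d, 0 <= d < d0 -> 0 <= modulus f lo T d < eps.
Proof.
  intros HlT Hf eps Heps.
  destruct (continuous_on_bounded f lo T HlT Hf) as [M HM].
  destruct (continuous_on_uniform f lo T HlT Hf (eps / 2)) as [d0 [Hd0 Hunif]]; [lra|].
  exists d0; split; auto. intros d Hd. split; [apply modulus_ge0 with M; tauto|].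
  apply Rle_lt_trans with (eps / 2); [|lra].
  apply modulus_le; try tauto. intros t1 t2 H1 H2 H12.
  left. apply Hunif; auto. lra.
Qed.

(** * A comparison principle *)

Lemma nonincreasing_of_deriv_nonpos f f' lo hi : lo < hi ->
  continuous_on f (fun t => lo <= t <= hi) ->
  (forall t, lo < t < hi -> derivable_pt_lim f t (f' t)) ->
  (forall t, lo < t < hi -> f' t <= 0) -> f hi <= f lo.
Proof.
  intros Hlh Hc Hd Hn.
  set (g := fun t => f (clamp lo hi t)).
  assert (Hg : forall t, lo < t < hi -> derivable_pt_lim g t (f' t)).
  { intros t Ht eps Heps. destruct (Hd t Ht eps Heps) as [d Hdd].
    assert (Hp : 0 < Rmin d (Rmin (t - lo) (hi - t))).
    { apply Rmin_pos; [apply cond_pos | apply Rmin_pos; lra]. }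
    exists (mkposreal _ Hp). intros u Hu0 Hu. simpl in Hu.
    assert (Hud : Rabs u < d) by (eapply Rlt_le_trans; [exact Hu | apply Rmin_l]).
    assert (Hut : Rabs u < Rmin (t - lo) (hi - t))
      by (eapply Rlt_le_trans; [exact Hu | apply Rmin_r]).
    assert (Hm1 := Rmin_l (t - lo) (hi - t)). assert (Hm2 := Rmin_r (t - lo) (hi - t)).
    unfold g. rewrite !clamp_id; [apply Hdd; auto | lra |].
    revert Hut; unfold Rabs; destruct Rcase_abs; lra. }
  assert (pr : forall c, lo < c < hi -> derivable_pt g c)
    by (intros c Hcc; exists (f' c); apply Hg; auto).
  destruct (MVT g id lo hi pr (fun c _ => derivable_pt_id c) Hlh
     (fun c _ => continuity_pt_clamp f lo hi (Rlt_le _ _ Hlh) Hc c)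
     (fun c _ => derivable_continuous_pt _ _ (derivable_pt_id c))) as [c [Hcc HMVT]].
  rewrite derive_pt_id, (derive_pt_eq_0 _ _ _ _ (Hg c Hcc)) in HMVT.
  unfold g, id in HMVT. rewrite !clamp_id in HMVT by lra.
  specialize (Hn c Hcc). nra.
Qed.

Lemma Rabs_le_of_deriv_le f f' g g' lo hi : lo < hi ->
  continuous_on f (fun t => lo <= t <= hi) -> continuous_on g (fun t => lo <= t <= hi) ->
  (forall t, lo < t < hi -> derivable_pt_lim f t (f' t)) ->
  (forall t, lo < t < hi -> derivable_pt_lim g t (g' t)) ->
  (forall t, lo < t < hi -> Rabs (f' t) <= g' t) ->
  Rabs (f lo) <= g lo -> Rabs (f hi) <= g hi.
Proof.
  intros Hlh Hfc Hgc Hf Hg Hfg Hlo.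
  assert (Hup : f hi - g hi <= f lo - g lo).
  { apply (nonincreasing_of_deriv_nonpos (fun t => f t - g t) (fun t => f' t - g' t)); auto.
    - apply continuous_on_minus; auto.
    - intros t Ht. apply derivable_pt_lim_minus; auto.
    - intros t Ht. specialize (Hfg t Ht). apply Rabs_le_between in Hfg. lra. }
  assert (Hdown : - f hi - g hi <= - f lo - g lo).
  { apply (nonincreasing_of_deriv_nonpos (fun t => - f t - g t) (fun t => - f' t - g' t));
      auto.
    - apply continuous_on_minus; [apply continuous_on_opp|]; auto.
    - intros t Ht. apply derivable_pt_lim_minus; [apply derivable_pt_lim_opp|]; auto.
    - intros t Ht. specialize (Hfg t Ht). apply Rabs_le_between in Hfg. lra. }
  apply Rabs_le_between in Hlo. apply Rabs_le. lra.
Qed.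

Section Primitive.
Variable a : R -> R.
Hypothesis a_cont : continuous_on a (fun t => 0 <= t).

(* A continuous extension to the whole line, so that Coquelicot's [RInt] calculus applies. *)
Definition ext0 (f : R -> R) (t : R) : R := f (Rmax 0 t).
Definition primitive0 (f : R -> R) (t : R) : R := RInt (ext0 f) 0 t.

Lemma continuous_ext0 c : continuous (ext0 a) c.
Proof. apply continuity_pt_filterlim, continuity_pt_Rmax_left, a_cont. Qed.

Lemma ex_RInt_ext0 u v : ex_RInt (ext0 a) u v.
Proof.
  apply (ex_RInt_continuous (V := R_CompleteNormedModule)). intros; apply continuous_ext0.
Qed.

Lemma derivable_pt_lim_primitive0 t : derivable_pt_lim (primitive0 a) t (ext0 a t).
Proof.
  apply is_derive_Reals, (is_derive_RInt (V := R_NormedModule) (ext0 a) _ 0 t);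
    [| apply continuous_ext0].
  apply filter_forall. intros b.
  apply (RInt_correct (V := R_CompleteNormedModule)), ex_RInt_ext0.
Qed.

Lemma primitive0_0 : primitive0 a 0 = 0.
Proof. unfold primitive0. rewrite RInt_point. reflexivity. Qed.

Lemma integral_primitive0 T : 0 <= T -> integral a 0 T = primitive0 a T.
Proof.
  intros HT.
  assert (Hext : forall t, Rmin 0 T < t < Rmax 0 T -> ext0 a t = a t).
  { intros t Ht. rewrite Rmin_left, Rmax_right in Ht by lra.
    unfold ext0. rewrite Rmax_right; lra. }
  assert (Ha : ex_RInt a 0 T) by (eapply ex_RInt_ext; [exact Hext | apply ex_RInt_ext0]).
  assert (pr := ex_RInt_Reals_0 _ _ _ Ha).
  unfold integral.
  destruct (epsilon_spec (inhabits 0)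
              (fun I => exists pr : Riemann_integrable a 0 T, RiemannInt pr = I))
    as [pr' <-]; [exists (RiemannInt pr), pr; reflexivity |].
  rewrite <- RInt_Reals. symmetry. apply RInt_ext. auto.
Qed.

Hypothesis a_ge0 : forall t, 0 <= t -> 0 <= a t.

Lemma ext0_ge0 t : 0 <= ext0 a t.
Proof. apply a_ge0, Rmax_l. Qed.

Lemma primitive0_le u v : u <= v -> primitive0 a u <= primitive0 a v.
Proof.
  intros Huv. unfold primitive0.
  rewrite <- (RInt_Chasles (ext0 a) 0 u v) by apply ex_RInt_ext0.
  assert (0 <= RInt (ext0 a) u v)
    by (apply RInt_ge_0; auto; [apply ex_RInt_ext0 | intros; apply ext0_ge0]).
  unfold plus; simpl. lra.
Qed.

Lemma primitive0_ge0 t : 0 <= t -> 0 <= primitive0 a t.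
Proof. intros Ht. rewrite <- primitive0_0. apply primitive0_le, Ht. Qed.

End Primitive.

Lemma exp_sub1_le u : exp u - 1 <= u * exp u.
Proof.
  assert (H1 := exp_ineq1_le (- u)).
  assert (H2 : exp (- u) * exp u = 1) by (rewrite <- exp_plus, Rplus_opp_l; apply exp_0).
  assert (H3 := exp_pos u). nra.
Qed.

Lemma Int_part_div_bounds u h : 0 < h ->
  IZR (Int_part (u / h)) * h <= u < IZR (Int_part (u / h)) * h + h.
Proof.
  intros Hh. set (v := u / h). destruct (base_Int_part v) as [H1 H2].
  assert (Hu : u = v * h) by (unfold v; field; lra).
  rewrite Hu. split; nra.
Qed.

Lemma Int_part_ge0 u : 0 <= u -> (0 <= Int_part u)%Z.
Proof.
  intros Hu. destruct (base_Int_part u) as [_ H].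
  assert (-1 < Int_part u)%Z by (apply lt_IZR; simpl; lra). lia.
Qed.

Lemma grid_cover h t : 0 < h -> 0 <= t -> exists i : nat, INR i * h <= t <= (INR i + 1) * h.
Proof.
  intros Hh Ht. exists (Z.to_nat (Int_part (t / h))).
  assert (Hm := Int_part_ge0 (t / h) (Rdiv_le_0_compat _ _ Ht Hh)).
  rewrite INR_IZR_INZ, Z2Nat.id by lia.
  destruct (Int_part_div_bounds t h Hh). lra.
Qed.

Lemma nat_sub_int_cases (i k : nat) (m : Z) : (0 <= m <= Z.of_nat k)%Z ->
  (exists j, (j <= i)%nat /\ INR i - IZR m = INR j) \/
  (exists n, (n <= k)%nat /\ INR i - IZR m = - INR n).
Proof.
  intros Hm. rewrite INR_IZR_INZ.
  destruct (Z_le_gt_dec m (Z.of_nat i)) as [Hle | Hgt].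
  - left. exists (Z.to_nat (Z.of_nat i - m)). split; [lia|].
    rewrite INR_IZR_INZ, Z2Nat.id, minus_IZR by lia. ring.
  - right. exists (Z.to_nat (m - Z.of_nat i)). split; [lia|].
    rewrite INR_IZR_INZ, Z2Nat.id, minus_IZR by lia. ring.
Qed.

(** * The error estimate *)

Section ErrorEstimate.
Variables (q : R) (a r phi x z : R -> R) (k : nat) (T : R).
Hypothesis q_gt0 : 0 < q.
Hypothesis k_ge1 : (1 <= k)%nat.
Hypothesis T_gt0 : 0 < T.
Hypothesis a_cont : continuous_on a (fun t => 0 <= t).
Hypothesis a_ge0 : forall t, 0 <= t -> 0 <= a t.
Hypothesis r_range : forall t, 0 <= t -> 0 <= r t <= q.
Hypothesis x_sol : is_solution_x q a r phi x.
Hypothesis z_sol : is_solution_z q a r phi k z.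

Let h := q / INR k.
Let W := modulus x (- q) T (modulus r 0 T h + 2 * h).
Let G t := W * (exp (primitive0 a t) - 1).
Let e t := x t - z t.
Let delay i := (INR i - kidx r h i) * h.

Lemma h_gt0 : 0 < h.
Proof. apply Rdiv_lt_0_compat; auto. apply lt_0_INR; lia. Qed.

Lemma k_mul_h : INR k * h = q.
Proof. unfold h. field. apply not_0_INR; lia. Qed.

Lemma x_bounded : exists M, forall t, -q <= t <= T -> Rabs (x t) <= M.
Proof.
  destruct x_sol as [_ [Hx _]].
  apply continuous_on_bounded; [lra|].
  eapply continuous_on_subset; [exact Hx | simpl; intros; lra].
Qed.

Lemma r_bounded t : 0 <= t <= T -> Rabs (r t) <= q.
Proof. intros Ht. destruct (r_range t (proj1 Ht)). rewrite Rabs_right; lra. Qed.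

Lemma W_ge0 : 0 <= W.
Proof.
  destruct x_bounded as [M HM]. assert (Hh := h_gt0).
  apply modulus_ge0 with M; [exact HM | lra |].
  assert (0 <= modulus r 0 T h) by (apply modulus_ge0 with q; [exact r_bounded | lra | lra]).
  lra.
Qed.

Lemma G_0 : G 0 = 0.
Proof. unfold G. rewrite primitive0_0, exp_0. ring. Qed.

Lemma G_le u v : u <= v -> G u <= G v.
Proof.
  intros Huv. unfold G. apply Rmult_le_compat_l; [apply W_ge0|].
  assert (exp (primitive0 a u) <= exp (primitive0 a v)); [|lra].
  destruct (Rle_lt_or_eq_dec _ _ (primitive0_le a a_cont a_ge0 u v Huv)) as [Hlt | ->].
  - apply Rlt_le, exp_increasing, Hlt.
  - lra.
Qed.

Lemma derivable_pt_lim_G t :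
  derivable_pt_lim G t (W * (exp (primitive0 a t) * ext0 a t)).
Proof.
  apply (derivable_pt_lim_scal (fun s => exp (primitive0 a s) - 1)).
  replace (exp (primitive0 a t) * ext0 a t)
    with (exp (primitive0 a t) * ext0 a t - 0) by ring.
  apply (derivable_pt_lim_minus (fun s => exp (primitive0 a s)) (fun _ => 1));
    [| apply derivable_pt_lim_const].
  apply (derivable_pt_lim_comp (primitive0 a) exp);
    [apply derivable_pt_lim_primitive0, a_cont | apply derivable_pt_lim_exp].
Qed.

Lemma continuous_on_G (D : R -> Prop) : continuous_on G D.
Proof.
  apply continuous_on_of_continuity_pt. intros c.
  apply derivable_continuous_pt. eexists. apply derivable_pt_lim_G.
Qed.

Lemma continuous_on_e : continuous_on e (fun t => 0 <= t).
Proof.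
  destruct x_sol as [_ [Hx _]]. destruct z_sol as [_ [Hz _]].
  apply continuous_on_minus; auto.
  eapply continuous_on_subset; [exact Hx | simpl; intros; lra].
Qed.

Lemma e_initial n : (n <= k)%nat -> e (- INR n * h) = 0.
Proof.
  intros Hn. destruct x_sol as [Hx _]. destruct z_sol as [Hz _]. unfold e, h.
  rewrite (Hz n Hn), Hx; [ring|]. fold h.
  assert (INR n <= INR k) by (apply le_INR; auto).
  assert (Hh := h_gt0). assert (Hkh := k_mul_h). assert (0 <= INR n) by apply pos_INR.
  split; nra.
Qed.

Lemma kidx_spec i :
  (0 <= Int_part (r (INR i * h) / h) <= Z.of_nat k)%Z /\
  kidx r h i * h <= r (INR i * h) < kidx r h i * h + h.
Proof.
  assert (Hh := h_gt0).
  assert (Hr := r_range (INR i * h) (Rmult_le_pos _ _ (pos_INR i) (Rlt_le _ _ Hh))).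
  assert (Hb := Int_part_div_bounds (r (INR i * h)) h Hh).
  unfold kidx. split; [split|exact Hb].
  - apply Int_part_ge0, Rdiv_le_0_compat; lra.
  - apply le_IZR. rewrite <- INR_IZR_INZ.
    assert (Hkh := k_mul_h). nra.
Qed.

Lemma delay_cases i :
  (exists j, (j <= i)%nat /\ delay i = INR j * h) \/
  (exists n, (n <= k)%nat /\ delay i = - INR n * h).
Proof.
  unfold delay, kidx.
  destruct (nat_sub_int_cases i k _ (proj1 (kidx_spec i))) as [[j [Hj ->]] | [n [Hn ->]]].
  - left; exists j; auto.
  - right; exists n; auto.
Qed.

(* [s - r(s) - delay i = (s - ih) + (k_i h - r(ih)) + (r(ih) - r(s))], with the first two
   terms of opposite signs and at most [h] in size. *)
Lemma delayed_x_gap i s : INR i * h <= s <= (INR i + 1) * h -> s <= T ->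
  Rabs (x (s - r s) - x (delay i)) <= W.
Proof.
  intros Hs HsT. assert (Hh := h_gt0). assert (Hi := pos_INR i).
  assert (Hs0 : 0 <= s) by nra.
  destruct (kidx_spec i) as [[Hm0 Hmk] [Hm1 Hm2]].
  assert (Hkid0 : 0 <= kidx r h i) by (apply IZR_le; lia).
  assert (Hdelay : delay i = INR i * h - kidx r h i * h) by (unfold delay; ring).
  assert (Hrs := r_range s Hs0).
  assert (Hri := r_range (INR i * h) ltac:(nra)).
  assert (Hrgap : Rabs (r s - r (INR i * h)) <= modulus r 0 T h).
  { apply le_modulus with q; [exact r_bounded | nra | lra |].
    rewrite Rabs_right; lra. }
  destruct x_bounded as [M HM].
  apply le_modulus with M; [exact HM | | lra |].
  - rewrite Hdelay. split; nra.
  - rewrite Hdelay. apply Rabs_le_between in Hrgap. apply Rabs_le. split; nra.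
Qed.

Lemma derivable_pt_lim_e i s : INR i * h < s < (INR i + 1) * h ->
  derivable_pt_lim e s (- a s * x (s - r s) - - a s * z (delay i)).
Proof.
  intros Hs. destruct x_sol as [_ [_ [Hx _]]]. destruct z_sol as [_ [_ [Hz _]]].
  assert (Hh := h_gt0). assert (Hi := pos_INR i).
  apply (derivable_pt_lim_minus x z); [apply Hx; nra | apply (Hz i s Hs)].
Qed.

Lemma e_deriv_bound i s : INR i * h < s < (INR i + 1) * h -> s <= T ->
  Rabs (e (delay i)) <= G s ->
  Rabs (- a s * x (s - r s) - - a s * z (delay i)) <=
    W * (exp (primitive0 a s) * ext0 a s).
Proof.
  intros Hs HsT He. assert (Hh := h_gt0). assert (Hi := pos_INR i).
  assert (Hs0 : 0 <= s) by nra.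
  assert (Hext : ext0 a s = a s) by (unfold ext0; rewrite Rmax_right; lra).
  assert (Has := a_ge0 s Hs0).
  assert (Hx := delayed_x_gap i s ltac:(lra) HsT).
  assert (HWG : W * exp (primitive0 a s) = W + G s) by (unfold G; ring).
  rewrite Hext, <- Rmult_assoc, HWG.
  replace (- a s * x (s - r s) - - a s * z (delay i))
    with (- a s * (x (s - r s) - x (delay i)) - a s * e (delay i)) by (unfold e; ring).
  apply Rabs_le_between in Hx. apply Rabs_le_between in He.
  apply Rabs_le. split; nra.
Qed.

Let bounded_on_interval i :=
  forall t, INR i * h <= t <= (INR i + 1) * h -> t <= T -> Rabs (e t) <= G t.

Lemma e_grid_le i : (forall j, (j < i)%nat -> bounded_on_interval j) ->
  INR i * h <= T -> Rabs (e (INR i * h)) <= G (INR i * h).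
Proof.
  intros IH HiT. destruct i as [|i].
  - replace (INR 0 * h) with (- INR 0 * h) by (simpl; ring).
    rewrite e_initial by lia. simpl. rewrite Ropp_0, Rmult_0_l, G_0, Rabs_R0. lra.
  - rewrite S_INR in *. assert (Hh := h_gt0). apply (IH i); [lia | split; nra | lra].
Qed.

Lemma e_delay_le i : (forall j, (j < i)%nat -> bounded_on_interval j) ->
  INR i * h <= T -> Rabs (e (delay i)) <= G (INR i * h).
Proof.
  intros IH HiT. assert (Hh := h_gt0).
  destruct (delay_cases i) as [[j [Hj ->]] | [n [Hn ->]]].
  - assert (Hji : INR j <= INR i) by (apply le_INR, Hj).
    eapply Rle_trans; [apply e_grid_le | apply G_le; nra].
    + intros j' Hj'. apply IH. lia.
    + nra.
  - rewrite e_initial, Rabs_R0, <- G_0 by exact Hn.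
    apply G_le. assert (Hi := pos_INR i). nra.
Qed.

Lemma e_interval_le i : (forall j, (j < i)%nat -> bounded_on_interval j) ->
  bounded_on_interval i.
Proof.
  intros IH t Ht HtT. assert (Hh := h_gt0). assert (Hi := pos_INR i).
  assert (Hstart := e_grid_le i IH ltac:(lra)).
  destruct (Req_dec t (INR i * h)) as [-> | Hne]; [exact Hstart|].
  apply (Rabs_le_of_deriv_le e (fun s => - a s * x (s - r s) - - a s * z (delay i))
           G (fun s => W * (exp (primitive0 a s) * ext0 a s)) (INR i * h) t);
    [lra | | apply continuous_on_G | | | |].
  - eapply continuous_on_subset; [exact continuous_on_e | simpl; intros; nra].
  - intros s Hs. apply derivable_pt_lim_e with (i := i). lra.
  - intros s _. apply derivable_pt_lim_G.
  - intros s Hs. apply e_deriv_bound; [lra | lra |].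
    eapply Rle_trans; [apply (e_delay_le i IH); lra | apply G_le; lra].
  - exact Hstart.
Qed.

Lemma e_le_G t : 0 <= t <= T -> Rabs (e t) <= G t.
Proof.
  intros Ht. destruct (grid_cover h t h_gt0 (proj1 Ht)) as [i Hi].
  apply (lt_wf_ind i bounded_on_interval e_interval_le); tauto.
Qed.

Lemma error_estimate :
  sup_on (fun t => Rabs (x t - z t)) 0 T <=
  exp (integral a 0 T) * integral a 0 T *
  modulus x (- q) T (modulus r 0 T (q / INR k) + 2 * (q / INR k)).
Proof.
  rewrite integral_primitive0 by (auto; lra). fold h W.
  assert (HI := primitive0_ge0 a a_cont a_ge0 T ltac:(lra)).
  assert (HGT : G T <= exp (primitive0 a T) * primitive0 a T * W).
  { unfold G. assert (HW := W_ge0). assert (Hexp := exp_sub1_le (primitive0 a T)). nra. }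
  apply sup_on_le; [lra|]. intros t Ht.
  eapply Rle_trans; [apply (e_le_G t Ht)|].
  eapply Rle_trans; [apply G_le, Ht | exact HGT].
Qed.

Lemma error_sup_ge0 : 0 <= sup_on (fun t => Rabs (x t - z t)) 0 T.
Proof.
  apply Rle_trans with (Rabs (x 0 - z 0)); [apply Rabs_pos|].
  apply (le_sup_on (fun t => Rabs (x t - z t)) 0 T (G T) 0); [| lra].
  intros t Ht. eapply Rle_trans; [apply (e_le_G t Ht) | apply G_le, Ht].
Qed.

End ErrorEstimate.

(** * Convergence *)

Lemma Un_cv_div_INR c : Un_cv (fun k => c / INR k) 0.
Proof.
  intros eps Heps.
  assert (Hc : 0 <= Rabs c / eps) by (apply Rdiv_le_0_compat; [apply Rabs_pos | lra]).
  destruct (archimed (Rabs c / eps)) as [Hup _].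
  assert (Hup0 : (0 <= up (Rabs c / eps))%Z) by (apply le_IZR; lra).
  exists (S (Z.to_nat (up (Rabs c / eps)))). intros k Hk. unfold Rdist.
  assert (HN : INR (S (Z.to_nat (up (Rabs c / eps)))) <= INR k) by (apply le_INR; lia).
  rewrite S_INR, INR_IZR_INZ, Z2Nat.id in HN by lia.
  assert (Hk0 : 0 < INR k) by lra.
  rewrite Rminus_0_r, Rabs_div, (Rabs_right (INR k)) by lra.
  apply Rmult_lt_reg_r with (INR k); auto.
  unfold Rdiv. rewrite Rmult_assoc, Rinv_l, Rmult_1_r by lra.
  apply Rmult_lt_reg_r with (/ eps); [apply Rinv_0_lt_compat; lra|].
  replace (eps * INR k * / eps) with (INR k) by (field; lra). lra.
Qed.

Lemma Un_cv_modulus f lo T (d : nat -> R) : lo <= T ->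
  continuous_on f (fun t => lo <= t <= T) ->
  (forall k, 0 <= d k) -> Un_cv d 0 -> Un_cv (fun k => modulus f lo T (d k)) 0.
Proof.
  intros HlT Hf Hd0 Hd eps Heps.
  destruct (modulus_small f lo T HlT Hf eps Heps) as [d0 [Hd0pos Hsmall]].
  destruct (Hd d0 Hd0pos) as [N HN].
  exists N. intros k Hk. unfold Rdist in *.
  specialize (HN k Hk). rewrite Rminus_0_r, Rabs_right in HN by (apply Rle_ge, Hd0).
  destruct (Hsmall (d k) (conj (Hd0 k) HN)).
  rewrite Rminus_0_r, Rabs_right; lra.
Qed.

Lemma Un_cv_scal0 (u : nat -> R) c : Un_cv u 0 -> Un_cv (fun k => c * u k) 0.
Proof.
  intros Hu. replace 0 with (c * 0) by ring. apply CV_mult; [|exact Hu].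
  intros eps Heps. exists 0%nat. intros k _. unfold Rdist. rewrite Rminus_eq_0, Rabs_R0. lra.
Qed.

Lemma Un_cv_le_mult (u v : nat -> R) C :
  (forall k, (1 <= k)%nat -> 0 <= u k <= C * v k) -> Un_cv v 0 -> Un_cv u 0.
Proof.
  intros Huv Hv eps Heps. destruct (Un_cv_scal0 v C Hv eps Heps) as [N HN].
  exists (S N). intros k Hk. specialize (HN k ltac:(lia)). specialize (Huv k ltac:(lia)).
  unfold Rdist in *. rewrite Rminus_0_r in *.
  apply Rabs_lt_between in HN. rewrite Rabs_right; lra.
Qed.

Theorem theorem3p2 :
  forall (q : R) (a r phi : R -> R),
    0 < q ->
    continuous_on a (fun t => 0 <= t) -> (forall t, 0 <= t -> 0 <= a t) ->
    continuous_on r (fun t => 0 <= t) -> (forall t, 0 <= t -> 0 <= r t <= q) ->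
    continuous_on phi (fun t => -q <= t <= 0) ->
    forall x : R -> R, is_solution_x q a r phi x ->
    forall z : nat -> R -> R,
      (forall k : nat, (1 <= k)%nat -> is_solution_z q a r phi k (z k)) ->
      (forall (T : R) (k : nat), 0 < T -> (1 <= k)%nat ->
         sup_on (fun t => Rabs (x t - z k t)) 0 T <=
         exp (integral a 0 T) * integral a 0 T *
         modulus x (- q) T (modulus r 0 T (q / INR k) + 2 * (q / INR k))) /\
      (forall T : R, 0 < T ->
         Un_cv (fun k => sup_on (fun t => Rabs (x t - z k t)) 0 T) 0).
Proof.
  intros q a r phi Hq Ha Ha0 Hr Hrq _ x Hx z Hz.
  split.
  - intros T k HT Hk. exact (error_estimate q a r phi x (z k) k T Hq Hk HT Ha Ha0 Hrq Hx (Hz k Hk)).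
  - intros T HT.
    assert (Hh0 : forall k, 0 <= q / INR k).
    { intros [|k]; [unfold Rdiv; rewrite INR_0, Rinv_0, Rmult_0_r; lra|].
      apply Rdiv_le_0_compat; [lra | apply lt_0_INR; lia]. }
    assert (Hr_mod : Un_cv (fun k => modulus r 0 T (q / INR k)) 0).
    { apply Un_cv_modulus; [lra | | exact Hh0 | apply Un_cv_div_INR].
      eapply continuous_on_subset; [exact Hr | simpl; intros; lra]. }
    apply (Un_cv_le_mult _
             (fun k => modulus x (- q) T (modulus r 0 T (q / INR k) + 2 * (q / INR k)))
             (exp (integral a 0 T) * integral a 0 T)).
    + intros k Hk. split.
      * exact (error_sup_ge0 q a r phi x (z k) k T Hq Hk HT Ha Ha0 Hrq Hx (Hz k Hk)).
      * exact (error_estimate q a r phi x (z k) k T Hq Hk HT Ha Ha0 Hrq Hx (Hz k Hk)).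
    + apply Un_cv_modulus; [lra | | |].
      * destruct Hx as [_ [Hxc _]].
        eapply continuous_on_subset; [exact Hxc | simpl; intros; lra].
      * intros k. assert (H := Hh0 k).
        assert (0 <= modulus r 0 T (q / INR k)); [|lra].
        apply modulus_ge0 with q; [| lra | exact H].
        intros t Ht. destruct (Hrq t (proj1 Ht)). rewrite Rabs_right; lra.
      * assert (H := CV_plus _ _ 0 0 Hr_mod (Un_cv_scal0 _ 2 (Un_cv_div_INR q))).
        rewrite Rplus_0_r in H. exact H.
Qed.
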